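(* Let $Q$ be any quandle and let $K$ be an oriented knot whose symmetry type is reversible, positive amphicheiral, or fully amphicheiral (i.e. not chiral and not negative amphicheiral). Then $$\mathrm{Col}_Q(rm(K))=\mathrm{Col}_Q(m(K))=\mathrm{Col}_Q(r(K))=\mathrm{Col}_Q(K).$$
   Context: A quandle is a set $X$ with a binary operation $*$ such that $a*a=a$ for all $a$; for all $b,c$ there is a unique $a$ with $a*b=c$; and $(a*b)*c=(a*c)*(b*c)$ for all $a,b,c$. A coloring of an oriented knot diagram by a quandle $X$ is a map from the set of arcs of the diagram to $X$ such that at each crossing, if the over-arc is colored $y$ and the under-arc on one side (determined by the orientation of the over-arc, under a fixed standard convention) is colored $x$, then the under-arc on the other side is colored $x*y$. Equivalently, colorings correspond bijectively to quandle homomorphisms from the fundamental quandle of the knot to $X$. $\mathrm{Col}_Q(K)$ denotes the number (cardinality) of colorings of a diagram of $K$ by $Q$; it is a knot invariant. For an oriented knot $K$, $m(K)$ is its mirror image and $r(K)$ is $K$ with orientation reversed; $K=K'$ means there is an orientation-preserving homeomorphism of $S^3$ taking $K$ to $K'$ respecting orientations. $K$ is reversible if its only symmetry is $K=r(K)$; negative amphicheiral if its only symmetry is $K=rm(K)$; positive amphicheiral if its only symmetry is $K=m(K)$; chiral if it has none of the symmetries $K=r(K)$, $K=m(K)$, $K=rm(K)$; fully amphicheiral if $K=r(K)=m(K)=rm(K)$. *)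

(* Oriented knots are modelled as closed braids
   (Alexander's theorem), and ambient isotopy of oriented knots in S^3
   (K = K' in the paper) as Markov equivalence of braid words (Markov's
   theorem). *)
From mathcomp Require Import all_boot.
From Stdlib Require Import Relations.

Set Implicit Arguments.
Unset Strict Implicit.
Unset Printing Implicit Defensive.

Record quandle := Quandle {
  qcar :> Type;
  qop : qcar -> qcar -> qcar;
  qop_idem : forall a, qop a a = a;
  qop_rinv : forall b c, exists! a, qop a b = c;
  qop_dist : forall a b c, qop (qop a b) c = qop (qop a c) (qop b c)
}.

(* A letter (i, true) is the Artin generator sigma_(i+1)
   (0-based index i, crossing between strand positions i and i+1),
   (i, false) is its inverse.  A braid is (number of strands, word).   *)
Definition letter := (nat * bool)%type.
Definition braid := (nat * seq letter)%type.

Definition valid_braid (b : braid) : bool :=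
  (0 < b.1) && all (fun a : letter => a.1.+1 < b.1) b.2.

Definition swap_pos (i j : nat) : nat :=
  if j == i then i.+1 else if j == i.+1 then i else j.
Definition braid_perm (w : seq letter) (j : nat) : nat :=
  foldl (fun p (a : letter) => swap_pos a.1 p) j w.

(* the closure of the braid is a knot (one component) *)
Definition is_knot (b : braid) : Prop :=
  valid_braid b /\
  forall j, j < b.1 -> exists k, iter k (braid_perm b.2) 0 = j.

Inductive markov_step : braid -> braid -> Prop :=
| MCancel n w1 w2 i b :
    valid_braid (n, w1 ++ (i, b) :: (i, ~~ b) :: w2) ->
    markov_step (n, w1 ++ (i, b) :: (i, ~~ b) :: w2) (n, w1 ++ w2)
| MComm n w1 w2 i j b c :
    i.+1 < j ->
    valid_braid (n, w1 ++ (i, b) :: (j, c) :: w2) ->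
    markov_step (n, w1 ++ (i, b) :: (j, c) :: w2) (n, w1 ++ (j, c) :: (i, b) :: w2)
| MBraid n w1 w2 i b :
    valid_braid (n, w1 ++ (i, b) :: (i.+1, b) :: (i, b) :: w2) ->
    markov_step (n, w1 ++ (i, b) :: (i.+1, b) :: (i, b) :: w2)
                (n, w1 ++ (i.+1, b) :: (i, b) :: (i.+1, b) :: w2)
| MConj n a w :
    valid_braid (n, a :: w) ->
    markov_step (n, a :: w) (n, w ++ [:: a])
| MStab n w b :
    valid_braid (n, w) ->
    markov_step (n, w) (n.+1, w ++ [:: (n.-1, b)]).

Definition knot_equiv (K K' : braid) : Prop :=
  clos_refl_sym_trans braid markov_step K K'.

Definition mirror (K : braid) : braid :=
  (K.1, map (fun a : letter => (a.1, ~~ a.2)) K.2).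
Definition reverse (K : braid) : braid := (K.1, rev K.2).

Definition reversible (K : braid) : Prop :=
  knot_equiv K (reverse K) /\ ~ knot_equiv K (mirror K) /\
  ~ knot_equiv K (reverse (mirror K)).
Definition negative_amphicheiral (K : braid) : Prop :=
  knot_equiv K (reverse (mirror K)) /\ ~ knot_equiv K (reverse K) /\
  ~ knot_equiv K (mirror K).
Definition positive_amphicheiral (K : braid) : Prop :=
  knot_equiv K (mirror K) /\ ~ knot_equiv K (reverse K) /\
  ~ knot_equiv K (reverse (mirror K)).
Definition fully_amphicheiral (K : braid) : Prop :=
  knot_equiv K (reverse K) /\ knot_equiv K (mirror K) /\
  knot_equiv K (reverse (mirror K)).

(* A state assigns a
   color to each of the n strand segments at a given level; at a
   positive crossing sigma_i the over strand goes from position i+1 to i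
   keeping its color y and the under strand goes from i to i+1 and gets
   color x * y; a negative crossing is the mirror situation.           *)
Definition state (Q : quandle) (n : nat) := 'I_n -> Q.

Definition cross_step (Q : quandle) (n : nat) (a : letter)
    (x y : state Q n) : Prop :=
  (forall j : 'I_n, val j != a.1 -> val j != a.1.+1 -> y j = x j) /\
  (forall j k : 'I_n, val j = a.1 -> val k = a.1.+1 ->
     if a.2 then y j = x k /\ y k = qop (x j) (x k)
     else y k = x j /\ x k = qop (y j) (x j)).

Fixpoint col_path (Q : quandle) (n : nat) (w : seq letter)
    (x : state Q n) (s : seq (state Q n)) : Prop :=
  match w, s with
  | [::], [::] => True
  | a :: w', y :: s' => cross_step a x y /\ col_path w' y s'
  | _, _ => False
  end.

Definition coloring (Q : quandle) (K : braid) : Type :=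
  { p : state Q K.1 * seq (state Q K.1) |
      col_path K.2 p.1 p.2 /\ last p.1 p.2 = p.1 }.

Definition same_card (A B : Type) : Prop := exists f : A -> B, bijective f.

(* A coloring of a closed braid is a coloring of the strand positions that is
   fixed by the action of the braid word, each letter acting through the quandle
   operation or its right inverse.  This action satisfies the braid relations,
   conjugating the word conjugates the action (so the fixed-point sets
   correspond), and a stabilizing crossing only forces the new strand to repeat
   the last color; hence Col_Q is a knot invariant.  The word of rm(K) is the
   inverse word, acting by the inverse bijection with the same fixed points, so
   Col_Q(rm K) = Col_Q(K) and, applied to m(K), Col_Q(r K) = Col_Q(m K) for every
   K.  The symmetry hypothesis gives K = r(K) or K = m(K), linking the two pairs. *)

From mathcomp Require Import all_boot zify.
From Stdlib Require Import IndefiniteDescription ProofIrrelevance FunctionalExtensionality.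

Set Implicit Arguments.
Unset Strict Implicit.
Unset Printing Implicit Defensive.

Lemma same_card_can (A B : Type) (f : A -> B) (g : B -> A) :
  cancel f g -> cancel g f -> same_card A B.
Proof. by move=> fK gK; exists f; exact: Bijective fK gK. Qed.

Lemma same_card_refl (A : Type) : same_card A A.
Proof. exact: (@same_card_can _ _ id id). Qed.

Lemma same_card_sym (A B : Type) : same_card A B -> same_card B A.
Proof. by case=> f [g fK gK]; exact: same_card_can gK fK. Qed.

Lemma same_card_trans (A B C : Type) :
  same_card A B -> same_card B C -> same_card A C.
Proof.
case=> f [g fK gK] [f' [g' fK' gK']].
by apply: (@same_card_can _ _ (f' \o f) (g \o g')) => x /=; rewrite ?fK' ?fK ?gK ?gK'.
Qed.

Lemma same_card_sig (A : Type) (P P' : A -> Prop) :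
  (forall x, P x <-> P' x) -> same_card {x | P x} {x | P' x}.
Proof.
move=> PP'.
apply: (@same_card_can _ _ (fun x => exist P' (sval x) ((PP' _).1 (svalP x)))
                           (fun x => exist P (sval x) ((PP' _).2 (svalP x))));
  by move=> [x px]; apply: subset_eq_compat.
Qed.

Definition fixpts (A : Type) (f : A -> A) := {x | f x = x}.

Lemma fixpts_eq (A : Type) (f g : A -> A) : f =1 g -> same_card (fixpts f) (fixpts g).
Proof. by move=> fg; apply: same_card_sig => x; rewrite fg. Qed.

Lemma fixpts_inv (A : Type) (f g : A -> A) :
  cancel f g -> cancel g f -> same_card (fixpts f) (fixpts g).
Proof.
move=> fK gK; apply: same_card_sig => x; split=> fx.
  by rewrite -{1}fx fK.
by rewrite -{1}fx gK.
Qed.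

Lemma fixpts_comp_comm (A : Type) (f g : A -> A) :
  same_card (fixpts (g \o f)) (fixpts (f \o g)).
Proof.
have fP (x : fixpts (g \o f)) : f (g (f (sval x))) = f (sval x).
  by case: x => x /= ->.
have gP (y : fixpts (f \o g)) : g (f (g (sval y))) = g (sval y).
  by case: y => y /= ->.
apply: (@same_card_can _ _ (fun x => exist _ (f (sval x)) (fP x))
                           (fun y => exist _ (g (sval y)) (gP y))).
  by move=> [x gfx]; apply: subset_eq_compat.
by move=> [y fgy]; apply: subset_eq_compat.
Qed.

Section QuandleDivision.
Variable Q : quandle.

Lemma qdiv_ex (c b : Q) : exists a, qop a b = c.
Proof. by case: (qop_rinv b c) => a [ab _]; exists a. Qed.

Definition qdiv (c b : Q) : Q :=
  proj1_sig (constructive_indefinite_description _ (qdiv_ex c b)).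

Lemma qdivK (c b : Q) : qop (qdiv c b) b = c.
Proof. exact: proj2_sig (constructive_indefinite_description _ (qdiv_ex c b)). Qed.

Lemma qop_inj (b : Q) : injective (fun a : Q => qop a b).
Proof.
move=> a a' eq_ab; case: (qop_rinv b (qop a b)) => z [_ uniq_z].
by rewrite -(uniq_z a erefl) -(uniq_z a' (esym eq_ab)).
Qed.

Lemma qopK (b : Q) : cancel (fun a : Q => qop a b) (qdiv^~ b).
Proof. by move=> a; apply: (@qop_inj b); rewrite qdivK. Qed.

Lemma qdivv (c : Q) : qdiv c c = c.
Proof. by rewrite -{1}(qop_idem c) qopK. Qed.

Lemma qdiv_dist (a b c : Q) : qdiv (qdiv c a) (qdiv b a) = qdiv (qdiv c b) a.
Proof.
apply: (@qop_inj (qdiv b a)); rewrite qdivK.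
by apply: (@qop_inj a); rewrite qop_dist !qdivK.
Qed.

End QuandleDivision.

Section PositionAction.
Variable Q : quandle.

Definition step_nat (a : letter) (x : nat -> Q) : nat -> Q := fun k =>
  if k == a.1 then (if a.2 then x a.1.+1 else qdiv (x a.1.+1) (x a.1))
  else if k == a.1.+1 then (if a.2 then qop (x a.1) (x a.1.+1) else x a.1)
  else x k.

Definition act_nat (w : seq letter) (x : nat -> Q) : nat -> Q :=
  foldl (fun y a => step_nat a y) x w.

Lemma act_nat_cons a w x : act_nat (a :: w) x = act_nat w (step_nat a x).
Proof. by []. Qed.

Lemma act_nat_cat w1 w2 x : act_nat (w1 ++ w2) x = act_nat w2 (act_nat w1 x).
Proof. exact: foldl_cat. Qed.

Lemma step_nat_at i b x :
  step_nat (i, b) x i = if b then x i.+1 else qdiv (x i.+1) (x i).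
Proof. by rewrite /step_nat /= eqxx. Qed.

Lemma step_nat_atS i b x :
  step_nat (i, b) x i.+1 = if b then qop (x i) (x i.+1) else x i.
Proof. by rewrite /step_nat /= eqxx (_ : (i.+1 == i) = false) //; lia. Qed.

Lemma step_nat_out i b x k : k != i -> k != i.+1 -> step_nat (i, b) x k = x k.
Proof. by rewrite /step_nat /= => /negbTE-> /negbTE->. Qed.

Ltac case_positions :=
  rewrite /step_nat /=;
  repeat (rewrite ?eqxx /=; match goal with |- context[?a == ?b] =>
    let E := fresh "E" in
    case: (@eqP _ a b) => [E|E]; [first [(exfalso; lia) | subst] | ] end);
  try (exfalso; lia); try reflexivity.

Lemma step_nat_cancel i b x : step_nat (i, ~~ b) (step_nat (i, b) x) = x.
Proof.
by apply: functional_extensionality => k; case: b; case_positions; rewrite ?qopK ?qdivK.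
Qed.

Lemma step_nat_comm i j b c x : i.+1 < j ->
  step_nat (j, c) (step_nat (i, b) x) = step_nat (i, b) (step_nat (j, c) x).
Proof. by move=> lt_ij; apply: functional_extensionality => k; case: b; case: c; case_positions. Qed.

Lemma step_nat_braid i b x :
  step_nat (i, b) (step_nat (i.+1, b) (step_nat (i, b) x)) =
  step_nat (i.+1, b) (step_nat (i, b) (step_nat (i.+1, b) x)).
Proof.
apply: functional_extensionality => k; case: b; case_positions.
  exact: qop_dist.
exact: qdiv_dist.
Qed.

Definition eq_below (n : nat) (f g : nat -> Q) := forall k, k < n -> f k = g k.

Definition word_on (n : nat) (w : seq letter) := all (fun a : letter => a.1.+1 < n) w.

Lemma eq_below_sym n f g : eq_below n f g -> eq_below n g f.
Proof. by move=> fg k lt_kn; rewrite fg. Qed.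

Lemma step_nat_eq_below a n x y : a.1.+1 < n -> eq_below n x y ->
  eq_below n (step_nat a x) (step_nat a y).
Proof.
case: a => i b /= lt_in xy k lt_kn; rewrite /step_nat /=.
have lt_i : i < n by lia.
by case: ifP => _; [|case: ifP => _]; rewrite !xy.
Qed.

Lemma act_nat_eq_below w n x y : word_on n w -> eq_below n x y ->
  eq_below n (act_nat w x) (act_nat w y).
Proof.
elim: w x y => [|a w IH] x y //= /andP[lt_an on_w] xy.
exact: IH on_w (step_nat_eq_below lt_an xy).
Qed.

Lemma act_nat_out w n x k : word_on n w -> n <= k -> act_nat w x k = x k.
Proof.
elim: w x => [|[i b] w IH] x //= /andP[lt_in on_w] le_nk.
by rewrite IH // step_nat_out //; apply/eqP; lia.
Qed.

End PositionAction.

Section StateAction.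
Variables (Q : quandle) (m : nat).

(* Extending by the last color identifies states on [m+1] strands with the
   position colorings that are constant from [m] on ([const_from] below). *)
Definition extend (x : state Q m.+1) : nat -> Q := fun k => x (inord (minn k m)).

Definition restrict (f : nat -> Q) : state Q m.+1 := fun j => f j.

Lemma extend_ord x (j : 'I_m.+1) : extend x j = x j.
Proof. by rewrite /extend (minn_idPl (ltnSE (ltn_ord j))) inord_val. Qed.

Lemma extend_last x k : m <= k -> extend x k = extend x m.
Proof. by move=> le_mk; rewrite /extend (minn_idPr le_mk) minnn. Qed.

Lemma restrict_extend x : restrict (extend x) = x.
Proof. by apply: functional_extensionality => j; rewrite /restrict extend_ord. Qed.

Lemma restrictP f x : restrict f = x <-> eq_below m.+1 f (extend x).
Proof.
split=> [<- | fx]; first by move=> k lt_km; rewrite -[k]/(nat_of_ord (Ordinal lt_km)) extend_ord.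
apply: functional_extensionality => j.
by rewrite /restrict (fx _ (ltn_ord j)) extend_ord.
Qed.

Lemma eq_below_restrict f g : eq_below m.+1 f g -> restrict f = restrict g.
Proof. by move=> fg; apply: functional_extensionality => j; rewrite /restrict (fg _ (ltn_ord j)). Qed.

Lemma extend_restrict f : eq_below m.+1 (extend (restrict f)) f.
Proof. exact/eq_below_sym/restrictP. Qed.

Definition step_state (a : letter) (x : state Q m.+1) : state Q m.+1 :=
  restrict (step_nat a (extend x)).

Definition act_state (w : seq letter) (x : state Q m.+1) : state Q m.+1 :=
  foldl (fun y a => step_state a y) x w.

Lemma act_state_cat w1 w2 x : act_state (w1 ++ w2) x = act_state w2 (act_state w1 x).
Proof. exact: foldl_cat. Qed.

Lemma act_stateE w x : word_on m.+1 w -> act_state w x = restrict (act_nat w (extend x)).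
Proof.
elim: w x => [|a w IH] x /=; first by rewrite restrict_extend.
case/andP=> lt_am on_w; rewrite IH //; apply/eq_below_restrict/act_nat_eq_below => //.
by apply/eq_below_sym/restrictP.
Qed.

Lemma cross_stepE a x y : a.1.+1 < m.+1 -> cross_step a x y <-> y = step_state a x.
Proof.
case: a => i b /= lt_im.
have lt_i : i < m.+1 by lia.
set i0 := Ordinal lt_i; set i1 := Ordinal lt_im.
have [x0 x1] : extend x i = x i0 /\ extend x i.+1 = x i1.
  by rewrite -[i]/(nat_of_ord i0) -[i.+1]/(nat_of_ord i1) !extend_ord.
split.
- case=> /= out /(_ i0 i1 erefl erefl) cross.
  apply: functional_extensionality => j; rewrite /step_state /restrict.
  have [ji | ne_ji] := eqVneq (j : nat) i.
    rewrite ji step_nat_at x0 x1 (_ : j = i0); last exact: val_inj.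
    by case: b cross => [[-> _] | [_ ->]]; rewrite ?qopK.
  have [ji1 | ne_ji1] := eqVneq (j : nat) i.+1.
    rewrite ji1 step_nat_atS x0 x1 (_ : j = i1); last exact: val_inj.
    by case: b cross => [[_ ->] | [-> _]].
  by rewrite step_nat_out // extend_ord; apply: out ne_ji ne_ji1.
- move=> ->; split=> [j ne_ji ne_ji1 | j k /= ji ki].
    by rewrite /step_state /restrict step_nat_out // extend_ord.
  have -> : j = i0 by exact: val_inj.
  have -> : k = i1 by exact: val_inj.
  by rewrite /step_state /restrict /= step_nat_at step_nat_atS x0 x1; case: b; rewrite ?qdivK.
Qed.

End StateAction.

Section Colorings.
Variables (Q : quandle) (m : nat).

Fixpoint trajectory (w : seq letter) (x : state Q m.+1) : seq (state Q m.+1) :=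
  if w is a :: w' then step_state a x :: trajectory w' (step_state a x) else [::].

Lemma col_pathE w x s : word_on m.+1 w -> col_path w x s <-> s = trajectory w x.
Proof.
elim: w x s => [|a w IH] x [|y s] //= /andP[lt_am on_w].
rewrite (cross_stepE _ _ lt_am) (IH _ _ on_w).
by split=> [[-> ->] | [-> ->]].
Qed.

Lemma last_trajectory w x : last x (trajectory w x) = act_state w x.
Proof. by elim: w x => //= a w IH x; exact: IH. Qed.

Lemma coloring_fixpts w : word_on m.+1 w ->
  same_card (coloring Q (m.+1, w)) (fixpts (@act_state Q m w)).
Proof.
move=> on_w.
have colP (p : coloring Q (m.+1, w)) : act_state w (sval p).1 = (sval p).1.
  case: p => [[x s] [path_xs closed]] /=.
  by move/(col_pathE _ _ on_w): path_xs closed => -> closed; rewrite -last_trajectory.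
have fixP (x : fixpts (@act_state Q m w)) :
    col_path w (sval x) (trajectory w (sval x)) /\
    last (sval x) (trajectory w (sval x)) = sval x.
  by split; [apply/col_pathE | rewrite last_trajectory (svalP x)].
apply: (@same_card_can _ _ (fun p => exist _ (sval p).1 (colP p))
                           (fun x => exist _ (sval x, trajectory w (sval x)) (fixP x))).
  move=> [[x s] [path_xs closed]]; apply: subset_eq_compat => /=.
  by move/(col_pathE _ _ on_w): path_xs => <-.
by move=> [x fx]; apply: subset_eq_compat.
Qed.

Definition const_from (X : nat -> Q) := forall k, m <= k -> X k = X m.

Lemma fixpts_nat w : word_on m.+1 w ->
  same_card (fixpts (@act_state Q m w))
            {X | const_from X /\ eq_below m.+1 (act_nat w X) X}.
Proof.
move=> on_w.
have extP (x : fixpts (@act_state Q m w)) :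
    const_from (extend (sval x)) /\ eq_below m.+1 (act_nat w (extend (sval x))) (extend (sval x)).
  split; first exact: extend_last.
  by apply/restrictP; rewrite -act_stateE // (svalP x).
have resP (X : {X | const_from X /\ eq_below m.+1 (act_nat w X) X}) :
    @act_state Q m w (restrict (sval X)) = restrict (sval X).
  case: X => X [_ fixX] /=; rewrite act_stateE //; apply: eq_below_restrict => k lt_km.
  by rewrite (act_nat_eq_below on_w (extend_restrict X) lt_km) fixX.
apply: (@same_card_can _ _ (fun x => exist _ (extend (sval x)) (extP x))
                           (fun X => exist _ (restrict (sval X)) (resP X))).
  by move=> [x fx]; apply: subset_eq_compat; rewrite /= restrict_extend.
move=> [X XP]; have [constX _] := XP; apply: subset_eq_compat => /=.
apply: functional_extensionality => k; case: (leqP k m) => [le_km | lt_mk].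
  exact: extend_restrict.
have le_mk := ltnW lt_mk.
by rewrite extend_last // constX // extend_restrict.
Qed.

End Colorings.

Section Stabilization.
Variables (Q : quandle) (m : nat).

Lemma step_nat_last_fixed b (X Y : nat -> Q) : Y m.+1 = X m.+1 ->
  eq_below m.+2 (step_nat (m, b) Y) X <-> eq_below m.+1 Y X /\ X m.+1 = X m.
Proof.
move=> YX1; split=> [fixed | [YX X1]].
- have [X1 Ym] : X m.+1 = X m /\ Y m = X m.
    move: (fixed m (ltnW (ltnSn _))) (fixed m.+1 (ltnSn _)); clear fixed.
    rewrite step_nat_at step_nat_atS YX1.
    case: b => [fix0 fix1 | fix0 fix1].
      by split=> //; apply: (@qop_inj _ (X m)); rewrite qop_idem -fix0 fix1.
    by rewrite fix1 qdivv in fix0; rewrite fix1 fix0.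
  split=> // k lt_km; have [-> // | ne_km] := eqVneq k m.
  by rewrite -(fixed k) ?step_nat_out //; apply/eqP; lia.
- move=> k lt_km2; have [-> | ne_km] := eqVneq k m.
    by rewrite step_nat_at YX1 X1 YX //; case: b; rewrite ?qdivv.
  have [-> | ne_km1] := eqVneq k m.+1.
    by rewrite step_nat_atS YX1 YX // X1; case: b; rewrite ?qop_idem.
  by rewrite step_nat_out // YX //; lia.
Qed.

Lemma stabilize_fixed w b (X : nat -> Q) : word_on m.+1 w ->
  const_from m X /\ eq_below m.+1 (act_nat w X) X <->
  const_from m.+1 X /\ eq_below m.+2 (act_nat (w ++ [:: (m, b)]) X) X.
Proof.
move=> on_w; rewrite act_nat_cat step_nat_last_fixed ?(act_nat_out _ on_w) //.
split=> [[constX fixX] | [constX1 [fixX X1]]].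
  by split=> [k le_mk|]; rewrite ?constX //; lia.
by split=> // k; rewrite leq_eqVlt => /orP[/eqP-> // | lt_mk]; rewrite constX1.
Qed.

End Stabilization.

Definition inv_letter (a : letter) : letter := (a.1, ~~ a.2).

Definition inv_word (w : seq letter) : seq letter := rev (map inv_letter w).

Lemma inv_letterK : involutive inv_letter.
Proof. by case=> i b; rewrite /inv_letter negbK. Qed.

Lemma inv_wordK : involutive inv_word.
Proof. by move=> w; rewrite /inv_word map_rev revK (mapK inv_letterK). Qed.

Lemma word_on_inv n w : word_on n (inv_word w) = word_on n w.
Proof. by rewrite /word_on all_rev all_map. Qed.

Section Invariance.
Variables (Q : quandle) (m : nat).

Lemma step_state_inv a : a.1.+1 < m.+1 ->
  cancel (@step_state Q m a) (step_state (inv_letter a)).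
Proof.
move=> lt_am x; rewrite -[LHS]/(act_state [:: a; inv_letter a] x) act_stateE /=; last by rewrite lt_am.
by case: a lt_am => i b _; rewrite step_nat_cancel restrict_extend.
Qed.

Lemma act_state_inv w : word_on m.+1 w ->
  cancel (@act_state Q m w) (act_state (inv_word w)).
Proof.
elim: w => [|a w IH] //= /andP[lt_am on_w] x.
by rewrite /inv_word map_cons rev_cons -cats1 act_state_cat IH //= step_state_inv.
Qed.

Lemma coloring_inv_word w : word_on m.+1 w ->
  same_card (coloring Q (m.+1, w)) (coloring Q (m.+1, inv_word w)).
Proof.
move=> on_w; have on_w' : word_on m.+1 (inv_word w) by rewrite word_on_inv.
apply: same_card_trans (coloring_fixpts Q on_w) _.
apply: same_card_trans _ (same_card_sym (coloring_fixpts Q on_w')).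
apply: fixpts_inv; first exact: act_state_inv.
by have := act_state_inv on_w'; rewrite inv_wordK.
Qed.

Lemma coloring_act_nat w w' : word_on m.+1 w -> word_on m.+1 w' ->
  (forall X : nat -> Q, act_nat w X = act_nat w' X) ->
  same_card (coloring Q (m.+1, w)) (coloring Q (m.+1, w')).
Proof.
move=> on_w on_w' ww'.
apply: same_card_trans (coloring_fixpts Q on_w) _.
apply: same_card_trans _ (same_card_sym (coloring_fixpts Q on_w')).
by apply: fixpts_eq => x; rewrite !act_stateE // ww'.
Qed.

Lemma coloring_rotate a w : word_on m.+1 (a :: w) ->
  same_card (coloring Q (m.+1, a :: w)) (coloring Q (m.+1, w ++ [:: a])).
Proof.
move=> on_aw; have on_wa : word_on m.+1 (w ++ [:: a]).
  by move: on_aw; rewrite /word_on all_cat /= andbT andbC.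
apply: same_card_trans (coloring_fixpts Q on_aw) _.
apply: same_card_trans _ (same_card_sym (coloring_fixpts Q on_wa)).
apply: same_card_trans (fixpts_comp_comm (step_state a) (act_state w)) _.
by apply: fixpts_eq => x; rewrite act_state_cat.
Qed.

Lemma coloring_stabilize w b : word_on m.+1 w ->
  same_card (coloring Q (m.+1, w)) (coloring Q (m.+2, w ++ [:: (m, b)])).
Proof.
move=> on_w; have on_wb : word_on m.+2 (w ++ [:: (m, b)]).
  by move: on_w; rewrite /word_on all_cat /= ltnSn !andbT; apply: sub_all => a /ltnW.
apply: same_card_trans (coloring_fixpts Q on_w) _.
apply: same_card_trans _ (same_card_sym (coloring_fixpts Q on_wb)).
apply: same_card_trans (fixpts_nat Q on_w) _.
apply: same_card_trans _ (same_card_sym (fixpts_nat Q on_wb)).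
by apply: same_card_sig => X; exact: stabilize_fixed.
Qed.

End Invariance.

Lemma markov_step_same_card (Q : quandle) K K' : markov_step K K' ->
  same_card (coloring Q K) (coloring Q K').
Proof.
case=> [n w1 w2 i b | n w1 w2 i j b c lt_ij | n w1 w2 i b | n a w | n w b];
  case: n => [|m] // /andP[_ on_W].
- apply: coloring_act_nat => //.
    by move: on_W; rewrite /word_on !all_cat /= => /andP[-> /and3P[_ _ ->]].
  by move=> X; rewrite !act_nat_cat !act_nat_cons step_nat_cancel.
- apply: coloring_act_nat => //.
    by move: on_W; rewrite /word_on !all_cat /= => /andP[-> /and3P[-> -> ->]].
  by move=> X; rewrite !act_nat_cat !act_nat_cons step_nat_comm.
- apply: coloring_act_nat => //.
    by move: on_W; rewrite /word_on !all_cat /= => /andP[-> /and4P[-> -> _ ->]].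
  by move=> X; rewrite !act_nat_cat !act_nat_cons step_nat_braid.
- exact: coloring_rotate.
- exact: coloring_stabilize.
Qed.

Lemma knot_equiv_same_card (Q : quandle) K K' : knot_equiv K K' ->
  same_card (coloring Q K) (coloring Q K').
Proof.
elim=> [K1 K2 | K1 | K1 K2 _ | K1 K2 K3 _ IH12 _ IH23].
- exact: markov_step_same_card.
- exact: same_card_refl.
- exact: same_card_sym.
- exact: same_card_trans IH12 IH23.
Qed.

Lemma coloring_reverse_mirror (Q : quandle) K : valid_braid K ->
  same_card (coloring Q K) (coloring Q (reverse (mirror K))).
Proof. by case: K => [[|m] w] // /andP[_ on_w]; exact: coloring_inv_word. Qed.

Lemma coloring_mirror_reverse (Q : quandle) K : valid_braid K ->
  same_card (coloring Q (mirror K)) (coloring Q (reverse K)).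
Proof.
case: K => n w valid_K.
have valid_mK : valid_braid (mirror (n, w)) by rewrite /valid_braid /= all_map.
have := coloring_reverse_mirror Q valid_mK.
by rewrite /reverse /mirror /= (mapK inv_letterK).
Qed.

Theorem corollary3p3 (Q : quandle) (K : braid) :
  is_knot K ->
  (reversible K \/ positive_amphicheiral K \/ fully_amphicheiral K) ->
  same_card (coloring Q (reverse (mirror K))) (coloring Q (mirror K)) /\
  same_card (coloring Q (mirror K)) (coloring Q (reverse K)) /\
  same_card (coloring Q (reverse K)) (coloring Q K).
Proof.
case=> valid_K _ sym_K.
have rm_K := coloring_reverse_mirror Q valid_K.
have mr_K := coloring_mirror_reverse Q valid_K.
have r_K : same_card (coloring Q K) (coloring Q (reverse K)).
  case: sym_K => [[eq_r _] | [[eq_m _] | [eq_r _]]].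
  - exact: knot_equiv_same_card eq_r.
  - exact: same_card_trans (knot_equiv_same_card Q eq_m) mr_K.
  - exact: knot_equiv_same_card eq_r.
split; last split.
- exact: same_card_trans (same_card_sym rm_K) (same_card_trans r_K (same_card_sym mr_K)).
- exact: mr_K.
- exact: same_card_sym r_K.
Qed.
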